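(* Let $R$ be a finite local Frobenius ring which is not a field, with fixed primitive additive character $\psi$, and let $\tau$ be a non-primitive multiplicative character of $R$. Then: (i) $K_\tau(a)=0$ for every $a\in R\setminus R^\times$; (ii) if $R$ has odd characteristic, then moreover $K_\tau(a)=0$ for every $a\in R$ with $a\notin (R^\times)^2$ (the set of squares of units).
   Context: All rings are finite and commutative with identity; $R^\times$ is the unit group; $M$ is the maximal ideal of the local ring $R$. An additive character $(R,+)\to\mathbb{C}^*$ is primitive if the only ideal on which it is identically $1$ is $(0)$; $R$ is Frobenius if such a character exists. A multiplicative character is a homomorphism $R^\times\to\mathbb{C}^*$. Its conductor is: $R$ if the character is trivial; otherwise the largest ideal $I\subseteq M$ such that the character is identically $1$ on the subgroup $1+I$. A multiplicative character is primitive if its conductor is $(0)$. The twisted Kloosterman sum is $K_\tau(a)=\sum_{u\in R^\times}\tau(u)\psi(u+au^{-1})$. ''Odd characteristic'' for a local ring means the residue field $R/M$ has odd characteristic. *)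

From HB Require Import structures.
From mathcomp Require Import all_boot all_order all_algebra all_fingroup all_field.
Set Implicit Arguments. Unset Strict Implicit. Unset Printing Implicit Defensive.
Import GRing.Theory.
Local Open Scope ring_scope.

Section Defs.
Variable R : finComUnitRingType.

Definition is_ideal (I : {set R}) : Prop :=
  [/\ 0 \in I,
      (forall x y, x \in I -> y \in I -> x + y \in I) &
      (forall r x, x \in I -> r * x \in I)].

(* The set of non-units; for a local ring this is the maximal ideal M. *)
Definition nonunits : {set R} := [set x | x \isn't a GRing.unit].

(* R is local: it has a unique maximal ideal, i.e. the non-units form an ideal. *)
Definition is_local : Prop := is_ideal nonunits.

Definition is_field : Prop := forall x : R, x != 0 -> x \is a GRing.unit.

Definition add_char (psi : R -> algC) : Prop :=
  (forall x, psi x != 0) /\ (forall x y, psi (x + y) = psi x * psi y).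

Definition primitive_add_char (psi : R -> algC) : Prop :=
  add_char psi /\
  forall I : {set R}, is_ideal I -> (forall x, x \in I -> psi x = 1) -> I = [set 0].

Definition mult_char (tau : {unit R} -> algC) : Prop :=
  (forall u, tau u != 0) /\ (forall u v, tau (u * v)%g = tau u * tau v).

Definition trivial_on_1plus (tau : {unit R} -> algC) (I : {set R}) : Prop :=
  forall u : {unit R}, FinRing.uval u - 1 \in I -> tau u = 1.

(* Conductor of tau is (0): tau is nontrivial and the largest ideal I ⊆ M
   with tau = 1 on 1 + I is (0), i.e. every such ideal is (0). *)
Definition primitive_mult_char (tau : {unit R} -> algC) : Prop :=
  (exists u, tau u != 1) /\
  forall I : {set R}, is_ideal I -> I \subset nonunits ->
    trivial_on_1plus tau I -> I = [set 0].

Definition kloosterman (psi : R -> algC) (tau : {unit R} -> algC) (a : R) : algC :=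
  \sum_(u : {unit R}) tau u * psi (FinRing.uval u + a * (FinRing.uval u)^-1).

(* Residue field R/M has odd characteristic: the prime p with p = 0 in R/M
   (i.e. p%:R in M) is odd. *)
Definition odd_residue_char : Prop :=
  forall p : nat, prime p -> (p%:R : R) \in nonunits -> odd p.

Definition unit_square (a : R) : Prop :=
  exists u : {unit R}, a = FinRing.uval u * FinRing.uval u.

End Defs.

From HB Require Import structures.
From mathcomp Require Import all_boot all_order all_algebra all_fingroup all_field.
From Stdlib Require Import Classical.
From mathcomp Require Import ring.
Set Implicit Arguments. Unset Strict Implicit. Unset Printing Implicit Defensive.
Import GRing.Theory Num.Theory.
Local Open Scope ring_scope.

(* Since tau is not primitive, some nonzero x with M x = 0 has tau trivial on
   1 + R x: take a minimal nonzero ideal inside the conductor of tau (inside M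
   when tau is trivial).  As x^2 = 0, the substitution u |-> u (1 + r x) gives
   K_tau(a) = sum_u tau(u) psi(u + a/u) psi(r x (u - a/u)) for every r.
   Summing over r, the inner sum is a complete character sum over the ideal
   R x (u - a/u) = R x when u - a/u is a unit, and it vanishes because psi is
   primitive.  Now u - a/u is a unit for every unit u when a is in M, and, in
   odd characteristic, also when a is not a unit square: otherwise a/u^2 lies
   in 1 + M, on which squaring is a bijection. *)

Definition principal_ideal (R : finComUnitRingType) (x : R) : {set R} :=
  [set r * x | r : R].

Lemma is_ideal_principal (R : finComUnitRingType) (x : R) :
  is_ideal (principal_ideal x).
Proof.
split.
- by apply/imsetP; exists 0; rewrite ?mul0r.
- move=> _ _ /imsetP[r _ ->] /imsetP[s _ ->].
  by apply/imsetP; exists (r + s); rewrite ?mulrDl.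
- move=> s _ /imsetP[r _ ->].
  by apply/imsetP; exists (s * r); rewrite ?mulrA.
Qed.

Lemma add_char_sum_eq0 (R : finComUnitRingType) (psi : R -> algC) z :
  add_char psi -> (exists r0, psi (r0 * z) != 1) ->
  \sum_(r : R) psi (r * z) = 0.
Proof.
move=> [_ psiD] [r0 psi_r0z]; set S := \sum_(r : R) psi (r * z).
have S_fixed : S * psi (r0 * z) = S.
  rewrite /S mulr_suml [RHS](reindex_inj (addIr r0)).
  by apply: eq_bigr => r _; rewrite -psiD mulrDl.
have : S * (psi (r0 * z) - 1) = 0 by rewrite mulrBr mulr1 S_fixed subrr.
by move/eqP; rewrite mulf_eq0 subr_eq0 (negPf psi_r0z) orbF => /eqP.
Qed.

Lemma primitive_add_char_principal (R : finComUnitRingType)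
    (psi : R -> algC) x :
  primitive_add_char psi -> x != 0 -> exists r, psi (r * x) != 1.
Proof.
move=> [_ psi_prim] x0; apply/existsP; apply: contraT => /existsPn psi1.
suff : x \in [set 0 : R] by rewrite inE (negPf x0).
rewrite -(psi_prim _ (is_ideal_principal x)).
  by apply/imsetP; exists 1; rewrite ?mul1r.
by move=> _ /imsetP[r _ ->]; apply/eqP/negPn/psi1.
Qed.

Section Kloosterman.
Variables (R : finComUnitRingType) (psi : R -> algC) (tau : {unit R} -> algC).
Hypothesis tau_char : mult_char tau.
Variable x : R.
Hypotheses (xx : x * x = 0) (tau1 : trivial_on_1plus tau (principal_ideal x)).

Lemma kloosterman_shift a r : add_char psi ->
  kloosterman psi tau a =
  \sum_(u : {unit R}) tau u * psi (FinRing.uval u + a * (FinRing.uval u)^-1)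
     * psi (r * (x * (FinRing.uval u - a * (FinRing.uval u)^-1))).
Proof.
move=> [_ psiD].
have inv_v : (1 + r * x) * (1 - r * x) = 1.
  have -> : (1 + r * x) * (1 - r * x) = 1 - r * r * (x * x) by ring.
  by rewrite xx mulr0 subr0.
have v_unit : 1 + r * x \is a GRing.unit by apply/unitrPr; exists (1 - r * x).
set v := FinRing.unit R v_unit.
have tau_v : tau v = 1.
  by apply: tau1; rewrite /= addrC addKr; apply/imsetP; exists r.
rewrite /kloosterman (reindex_inj (mulIg v)); apply: eq_bigr => u _.
rewrite (proj2 tau_char) tau_v mulr1 -mulrA -psiD.
have -> : FinRing.uval (u * v)%g = FinRing.uval u * (1 + r * x) by [].
rewrite invrM ?(valP u) //.
have -> : (1 + r * x)^-1 = 1 - r * x by apply: (mulrI v_unit); rewrite mulrV.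
by congr (_ * psi _); ring.
Qed.

Lemma kloosterman_eq0_principal a : primitive_add_char psi -> x != 0 ->
  (forall u : {unit R},
     FinRing.uval u - a * (FinRing.uval u)^-1 \is a GRing.unit) ->
  kloosterman psi tau a = 0.
Proof.
move=> psi_prim x0 c_unit.
have [r0 psi_r0x] := primitive_add_char_principal psi_prim x0.
suff : kloosterman psi tau a *+ #|R| = 0.
  move/eqP; rewrite mulrn_eq0 => /orP[/eqP/card0_eq/(_ 0)|/eqP //].
  by rewrite inE.
rewrite -sumr_const.
under eq_bigr => r _ do rewrite (kloosterman_shift a r psi_prim.1).
rewrite exchange_big big1 // => u _.
rewrite -mulr_sumr add_char_sum_eq0 ?mulr0 //; first exact: psi_prim.1.
exists (r0 * (FinRing.uval u - a * (FinRing.uval u)^-1)^-1).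
by rewrite [x * _]mulrC mulrA mulrVK.
Qed.

End Kloosterman.

Section LocalRing.
Variable R : finComUnitRingType.
Hypothesis R_local : is_local R.
Local Notation M := (nonunits R).

Lemma nonunitD x y : x \in M -> y \in M -> x + y \in M.
Proof. by case: R_local => _ + _; apply. Qed.

Lemma nonunitMl r x : x \in M -> r * x \in M.
Proof. by case: R_local => _ _; apply. Qed.

Lemma nonunitN x : x \in M -> - x \in M.
Proof. by move=> xM; rewrite -mulN1r nonunitMl. Qed.

Lemma unit_addr_nonunit u m : u \is a GRing.unit -> m \in M ->
  u + m \is a GRing.unit.
Proof.
move=> u_unit mM; apply: contraT => um_nonunit.
have : (u + m) - m \in M by rewrite nonunitD ?nonunitN // inE.
by rewrite addrK inE u_unit.
Qed.

(* Pick y of minimal principal ideal; if m y != 0 for some m in M, then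
   R m y is strictly smaller, since y = s m y would give (1 - s m) y = 0 with
   1 - s m a unit. *)
Lemma ideal_socle_elt (I : {set R}) x : is_ideal I -> x \in I -> x != 0 ->
  exists y, [/\ y \in I, y != 0 & forall m, m \in M -> m * y = 0].
Proof.
move=> [_ _ IM] xI x0.
pose P y := (y \in I) && (y != 0).
have Px : P x by rewrite /P xI.
have [y /andP[yI y0] ymin] := arg_minnP (fun y => #|principal_ideal y|) Px.
exists y; split => // m mM; apply/eqP; apply: contraT => my0.
have /ymin : P (m * y) by rewrite /P my0 IM.
rewrite leqNgt => /negbTE <-; apply: proper_card; apply/properP; split.
  apply/subsetP => _ /imsetP[r _ ->].
  by apply/imsetP; exists (r * m); rewrite ?mulrA.
exists y; first by apply/imsetP; exists 1; rewrite ?mul1r.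
apply/imsetP => -[s _ y_smy].
have u_unit : 1 - s * m \is a GRing.unit.
  by rewrite unit_addr_nonunit ?unitr1 ?nonunitN ?nonunitMl.
have : (1 - s * m) * y = 0 by rewrite mulrBl mul1r -mulrA -y_smy subrr.
by move/(canRL (mulKr u_unit)); rewrite mulr0; apply/eqP.
Qed.

Lemma nonprimitive_mult_char_socle (tau : {unit R} -> algC) :
  ~ is_field R -> ~ primitive_mult_char tau ->
  exists x, [/\ x != 0, x * x = 0 & trivial_on_1plus tau (principal_ideal x)].
Proof.
move=> R_nonfield tau_nonprim.
have [I [I_ideal IM tauI] [x xI x0]] : exists2 I : {set R},
    [/\ is_ideal I, I \subset M & trivial_on_1plus tau I] &
    exists2 x, x \in I & x != 0.
  case: (boolP [exists u, tau u != 1]) => [/existsP tau_nontriv | tau_triv].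
    apply: NNPP => noI; apply: tau_nonprim; split => // I I_ideal IM tauI.
    apply/setP => z; rewrite inE; apply/idP/eqP => [zI | ->]; last first.
      by case: I_ideal.
    by apply/eqP; apply: contraT => z0; case: noI; exists I; last exists z.
  have /existsP[x /andP[x0 xM]] : [exists x : R, (x != 0) && (x \in M)].
    apply: contraT => /existsPn noM; case: R_nonfield => x x0.
    by have := noM x; rewrite x0 inE negbK.
  exists M; last by exists x.
  split=> // v _; apply: contraNeq tau_triv => tau_v.
  by apply/existsP; exists v.
have [y [yI y0 My0]] := ideal_socle_elt I_ideal xI x0.
exists y; split => //; first exact/My0/(subsetP IM).
move=> v /imsetP[r _ v1]; apply: tauI; rewrite v1.
by case: I_ideal => _ _; apply.
Qed.

Lemma odd_residue_char_unit2 :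
  odd_residue_char R -> (2%:R : R) \is a GRing.unit.
Proof.
move=> R_odd; apply: contraT => two_nonunit.
by have := R_odd 2 isT; rewrite inE two_nonunit => /(_ isT).
Qed.

(* Squaring is injective on 1 + M because
   x^2 - y^2 = (2 + (x - 1) + (y - 1)) (x - y) with the first factor a unit. *)
Lemma sqrt_one_plus_nonunit b : (2%:R : R) \is a GRing.unit -> b - 1 \in M ->
  exists2 w, w - 1 \in M & w * w = b.
Proof.
move=> unit2 bM; pose S := [set x : R | x - 1 \in M].
have mem_S x : (x \in S) = (x - 1 \in M) by rewrite !inE.
have sqr_inj : {in S &, injective (fun x => x * x)}.
  move=> x y; rewrite !mem_S => xM yM xy.
  have u_unit : 2%:R + ((x - 1) + (y - 1)) \is a GRing.unit.
    by apply: unit_addr_nonunit unit2 (nonunitD xM yM).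
  have : (2%:R + ((x - 1) + (y - 1))) * (x - y) = 0.
    have -> : (2%:R + ((x - 1) + (y - 1))) * (x - y) = x * x - y * y by ring.
    by rewrite xy subrr.
  move/(canRL (mulKr u_unit)); rewrite mulr0 => /eqP.
  by rewrite subr_eq0 => /eqP.
have sqrS : [set x * x | x in S] \subset S.
  apply/subsetP => _ /imsetP[x xS ->]; rewrite !mem_S in xS *.
  have -> : x * x - 1 = (x + 1) * (x - 1) by ring.
  exact: nonunitMl.
have : b \in [set x * x | x in S].
  by move: sqrS; rewrite subEproper properEcard (card_in_imset sqr_inj) ltnn
       andbF orbF => /eqP ->; rewrite mem_S.
by case/imsetP => w; rewrite mem_S; exists w.
Qed.

Lemma unit_square_of_sub_inv_nonunit a u :
  u \is a GRing.unit -> (2%:R : R) \is a GRing.unit -> u - a * u^-1 \in M ->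
  unit_square a.
Proof.
move=> u_unit unit2 cM.
have [|w w1M ww] := @sqrt_one_plus_nonunit (a * u^-1 * u^-1) unit2.
  have -> : a * u^-1 * u^-1 - 1 = - ((u - a * u^-1) * u^-1).
    by rewrite mulrBl divrr //; ring.
  by rewrite nonunitN // mulrC nonunitMl.
have w_unit : w \is a GRing.unit.
  by rewrite -(subrK 1 w) addrC unit_addr_nonunit ?unitr1.
have wu_unit : w * u \is a GRing.unit by rewrite unitrM w_unit.
exists (FinRing.unit R wu_unit) => /=.
have -> : w * u * (w * u) = w * w * u * u by ring.
by rewrite ww !mulrVK.
Qed.

End LocalRing.

Theorem mainTheorem3 (R : finComUnitRingType)
  (psi : R -> algC) (tau : {unit R} -> algC)
  (hloc : is_local R) (hnf : ~ is_field R)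
  (hpsi : primitive_add_char psi)
  (htau : mult_char tau) (hnp : ~ primitive_mult_char tau) :
  (forall a : R, a \isn't a GRing.unit -> kloosterman psi tau a = 0) /\
  (odd_residue_char R ->
     forall a : R, ~ unit_square a -> kloosterman psi tau a = 0).
Proof.
have [x [x0 xx tau1]] := nonprimitive_mult_char_socle hloc hnf hnp.
have K0 a := @kloosterman_eq0_principal R psi tau htau x xx tau1 a hpsi x0.
split=> [a a_nonunit | R_odd a a_nonsquare]; apply: K0 => u.
  rewrite unit_addr_nonunit ?(valP u) ?nonunitN // mulrC nonunitMl //.
  by rewrite inE.
apply: contraT => c_nonunit; case: a_nonsquare.
apply: (unit_square_of_sub_inv_nonunit hloc (valP u)).
  exact: odd_residue_char_unit2.
by rewrite inE.
Qed.
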